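(* Let $({\cal A},* )$ be a real quantum group (a $*$-Hopf algebra with coproduct $\Delta$, antipode $S$), let $\tau=*\circ S$, and let $g:{\cal A}\rightarrow{\bf C}$ be a character, i.e. a $*$-homomorphism of ${\cal A}$ into ${\bf C}$. Define ${\rm Ad}_g\,x=\sum_{(x)}g(S(x_{(1)}))\,g(x_{(3)})\,x_{(2)}$ for $x\in{\cal A}$. Let $r:{\cal A}\rightarrow{\cal K}$ be the projection that defines a right coisotropic quantum subgroup ${\cal K}$ of ${\cal A}$, and let $r_g[x]=r[{\rm Ad}_g^{-1}\,x]$, $x\in{\cal A}$. Then ${\rm Ker}\,r_g={\rm Ad}_g\,{\rm Ker}\,r$ is a $\tau$-invariant right ideal and two-sided coideal of ${\cal A}$, and it determines a right coisotropic quantum subgroup ${\cal K}_g$. The corresponding homogeneous space $B^{r_g}=\{a\in{\cal A}\,|\,({\rm id}\otimes r_g)\Delta a=a\otimes r_g(1)\}$ equals ${\rm Ad}_g\,B^r$, where $B^r=\{a\in{\cal A}\,|\,({\rm id}\otimes r)\Delta a=a\otimes r(1)\}$, and $B^{r_g}$ is isomorphic to $B^r$ as a left comodule algebra.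
   Context: A real coisotropic quantum right subgroup $({\cal K},\tau_{\cal K})$ of a real quantum group $({\cal A},* )$ is a coalgebra and right ${\cal A}$-module ${\cal K}$ such that (i) there is a surjective linear map $r:{\cal A}\rightarrow{\cal K}$ which is a morphism of coalgebras and of right ${\cal A}$-modules (with ${\cal A}$ a module over itself via multiplication), and (ii) there is an antilinear map $\tau_{\cal K}:{\cal K}\rightarrow{\cal K}$ with $\tau_{\cal K}\circ r=r\circ\tau$, where $\tau=*\circ S$. Such subgroups correspond bijectively to $\tau$-invariant two-sided coideals that are right ideals in ${\cal A}$ (via ${\cal K}={\cal A}/{\rm Ker}\,r$). *)

From mathcomp Require Import all_boot all_algebra.
From mathcomp Require Import reals complex.
Set Implicit Arguments.
Unset Strict Implicit.
Unset Printing Implicit Defensive.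
Import GRing.Theory Num.Theory.
Local Open Scope ring_scope.

Section Defs.
Variable R : realType.
Local Notation C := (R[i]).

(* Algebraic tensors.  An element of V (x) W is represented by a finite *)
(* list of simple tensors  sum_i v_i (x) w_i.  Two representations are  *)
(* equal in V (x) W iff they agree under all pure functionals f (x) h   *)
(* (pure functionals separate the points of an algebraic tensor product *)
(* of vector spaces).                                                   *)
Definition teq2 (V W : lmodType C) (s t : seq (V * W)) : Prop :=
  forall (f : {scalar V}) (h : {scalar W}),
    \sum_(p <- s) f p.1 * h p.2 = \sum_(p <- t) f p.1 * h p.2.

Definition teq3 (U V W : lmodType C) (s t : seq (U * V * W)) : Prop :=
  forall (e : {scalar U}) (f : {scalar V}) (h : {scalar W}),
    \sum_(p <- s) e p.1.1 * f p.1.2 * h p.2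
    = \sum_(p <- t) e p.1.1 * f p.1.2 * h p.2.

(* Real quantum group = *-Hopf algebra over C.  The coproduct is given *)
(* in Sweedler form: cop x = [:: (x_(1), x_(2)); ...] (a representative *)
(* of Delta x in A (x) A).                                              *)
Record hopf_ops (A : algType C) := HopfOps {
  cop  : A -> seq (A * A);
  cou  : A -> C;
  ant  : A -> A;
  star : A -> A
}.

Section Hopf.
Variables (A : algType C) (H : hopf_ops A).

Definition scale_left (a : C) (s : seq (A * A)) :=
  [seq (a *: p.1, p.2) | p <- s].

Definition is_star_hopf : Prop :=
  [/\ [/\
      (forall (a : C) (x y : A),
         teq2 (cop H (a *: x + y)) (scale_left a (cop H x) ++ cop H y)),
      (forall x y : A,
         teq2 (cop H (x * y))
              [seq (p.1 * q.1, p.2 * q.2) | p <- cop H x, q <- cop H y]),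
      teq2 (cop H 1) [:: (1, 1)] &
      (forall x : A,
         teq3 [seq (q.1, q.2, p.2) | p <- cop H x, q <- cop H p.1]
              [seq (p.1, q.1, q.2) | p <- cop H x, q <- cop H p.2])],
      [/\ forall (a : C) (x y : A), cou H (a *: x + y) = a * cou H x + cou H y,
          forall x y : A, cou H (x * y) = cou H x * cou H y,
          cou H 1 = 1,
          forall x : A, \sum_(p <- cop H x) cou H p.1 *: p.2 = x &
          forall x : A, \sum_(p <- cop H x) cou H p.2 *: p.1 = x],
      [/\ forall (a : C) (x y : A), ant H (a *: x + y) = a *: ant H x + ant H y,
          forall x : A, \sum_(p <- cop H x) ant H p.1 * p.2 = cou H x *: 1 &
          forall x : A, \sum_(p <- cop H x) p.1 * ant H p.2 = cou H x *: 1] &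
      [/\ forall (a : C) (x y : A),
            star H (a *: x + y) = a^* *: star H x + star H y,
          forall x : A, star H (star H x) = x,
          forall x y : A, star H (x * y) = star H y * star H x &
          forall x : A,
            teq2 (cop H (star H x)) [seq (star H p.1, star H p.2) | p <- cop H x]]].

Definition tau (x : A) : A := star H (ant H x).

Definition is_character (g : A -> C) : Prop :=
  [/\ forall (a : C) (x y : A), g (a *: x + y) = a * g x + g y,
      forall x y : A, g (x * y) = g x * g y,
      g 1 = 1 &
      forall x : A, g (star H x) = (g x)^*].

Definition Ad (g : A -> C) (x : A) : A :=
  \sum_(p <- cop H x) \sum_(q <- cop H p.2) (g (ant H p.1) * g q.2) *: q.1.

Record cqs_ops (K : lmodType C) := CqsOps {
  kcop : K -> seq (K * K);
  kcou : K -> C;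
  kact : K -> A -> K;
  ktau : K -> K
}.

Definition is_rcqs (K : lmodType C) (O : cqs_ops K) (r : A -> K) : Prop :=
  [/\
      [/\ forall (a : C) (k l : K),
            teq2 (kcop O (a *: k + l))
                 ([seq (a *: p.1, p.2) | p <- kcop O k] ++ kcop O l),
          forall (a : C) (k l : K), kcou O (a *: k + l) = a * kcou O k + kcou O l,
          forall k : K,
            teq3 [seq (q.1, q.2, p.2) | p <- kcop O k, q <- kcop O p.1]
                 [seq (p.1, q.1, q.2) | p <- kcop O k, q <- kcop O p.2],
          forall k : K, \sum_(p <- kcop O k) kcou O p.1 *: p.2 = k &
          forall k : K, \sum_(p <- kcop O k) kcou O p.2 *: p.1 = k],
      [/\ forall (a : C) (k l : K) (x : A),
            kact O (a *: k + l) x = a *: kact O k x + kact O l x,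
          forall (a : C) (k : K) (x y : A),
            kact O k (a *: x + y) = a *: kact O k x + kact O k y,
          forall k : K, kact O k 1 = k &
          forall (k : K) (x y : A), kact O (kact O k x) y = kact O k (x * y)],
      [/\
      (forall (a : C) (x y : A), r (a *: x + y) = a *: r x + r y),
      (forall k : K, exists x : A, r x = k),
      (forall x : A, teq2 (kcop O (r x)) [seq (r p.1, r p.2) | p <- cop H x]
                     /\ kcou O (r x) = cou H x) &
      (forall x y : A, r (x * y) = kact O (r x) y)] &
      (forall (a : C) (k l : K), ktau O (a *: k + l) = a^* *: ktau O k + ktau O l)
      /\ (forall x : A, ktau O (r x) = r (tau x))].

Definition is_tau_rideal_coideal (I : A -> Prop) : Prop :=
  [/\ I 0,
      (forall (a : C) (x y : A), I x -> I y -> I (a *: x + y)),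
      (forall x y : A, I x -> I (x * y)),
      (forall x : A, I x -> I (tau x)) &
      (* Delta I <= I (x) A + A (x) I  and  epsilon I = 0 *)
      (forall x : A, I x ->
         cou H x = 0 /\
         exists s : seq (A * A), teq2 s (cop H x) /\
           forall p, p \in s -> I p.1 \/ I p.2)].

Definition homsp (K : lmodType C) (r : A -> K) (a : A) : Prop :=
  teq2 [seq (p.1, r p.2) | p <- cop H a] [:: (a, r 1)].

Definition lcomod_alg_iso (B1 B2 : A -> Prop) : Prop :=
  exists phi : A -> A,
    [/\ (forall a, B1 a -> B2 (phi a)),
        (forall a b, B1 a -> B1 b -> phi a = phi b -> a = b)
        /\ (forall b, B2 b -> exists a, B1 a /\ phi a = b),
        (forall (k : C) a b, B1 a -> B1 b -> phi (k *: a + b) = k *: phi a + phi b),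
        (phi 1 = 1 /\
         forall a b, B1 a -> B1 b -> phi (a * b) = phi a * phi b) &
        (forall a, B1 a ->
           exists s : seq (A * A),
             [/\ teq2 s (cop H a),
                 (forall p, p \in s -> B1 p.2) &
                 teq2 (cop H (phi a)) [seq (p.1, phi p.2) | p <- s]])].

End Hopf.
End Defs.

From HB Require Import structures.
From mathcomp Require Import all_boot all_algebra.
From mathcomp Require Import reals complex.
From mathcomp Require Import boolp classical_sets.
From mathcomp Require Import ring.
Import GRing.Theory Num.Theory.
Local Open Scope ring_scope.
Set Implicit Arguments. Unset Strict Implicit. Unset Printing Implicit Defensive.

(* Write L_f x = sum f(x_(1)) x_(2) and R_f x = sum f(x_(2)) x_(1) for the slice maps of a
   functional f, so that Ad_g = R_g o L_(g o S).  As g is a character with convolution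
   inverse g o S, the slices L_g and R_g are algebra automorphisms with inverses
   L_(g o S) and R_(g o S); left and right slices commute, hence Ad_g is invertible with
   inverse Ad_(g o S) = R_(g o S) o L_g.  Moreover Ad_g is a coalgebra map (in
   (Ad_g (x) Ad_g) Delta the two middle factors cancel because g * (g o S) = eps),
   it preserves products and the counit, and it commutes with tau (via
   L_f o S = S o R_(f o S) and the *-structure).  So every defining property of Ker r is
   transported along Ad_g.  The comodule algebra isomorphism B^r -> B^(r_g) is R_g alone:
   R_g commutes with the left coaction Delta, and R_g = Ad_g o L_g where L_g preserves B^r.
   Equalities in A (x) A are tested on pure functionals f (x) h, which separate the
   algebraic tensor product; for arbitrary vector spaces this relies on linear
   projections onto subspaces, obtained from Zorn's lemma. *)

Section LinearFor.
Variables (R : pzRingType) (U : lmodType R) (V : zmodType) (s : GRing.Scale.law R V).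
Variables (f : U -> V) (lf : GRing.linear_for s f).

Definition linear_pack : {linear U -> V | s} :=
  HB.pack f (GRing.isLinear.Build R U V s f lf).

Lemma lin0 : f 0 = 0. Proof. exact: (linear0 linear_pack). Qed.
Lemma linD x y : f (x + y) = f x + f y. Proof. exact: (linearD linear_pack). Qed.
Lemma linN x : f (- x) = - f x. Proof. exact: (linearN linear_pack). Qed.
Lemma lin_sum I r (P : pred I) (E : I -> U) :
  f (\sum_(i <- r | P i) E i) = \sum_(i <- r | P i) f (E i).
Proof. exact: (linear_sum linear_pack). Qed.

End LinearFor.

Lemma linZ (R : pzRingType) (U V : lmodType R) (f : U -> V) :
  linear f -> forall a x, f (a *: x) = a *: f x.
Proof. exact: scalable_linear. Qed.

Lemma linear_comp (R : pzRingType) (U V W : lmodType R) (f : U -> V) (h : W -> U) :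
  linear f -> linear h -> linear (fun x => f (h x)).
Proof. by move=> lf lh k x y; rewrite lh lf. Qed.

Lemma scalZ (R : comPzRingType) (U : lmodType R) (f : U -> R) :
  scalar f -> forall a x, f (a *: x) = a * f x.
Proof. exact: scalable_linear. Qed.

Section Projections.
Variables (F : fieldType) (V : lmodType F).

Definition subspace (U : V -> Prop) :=
  U 0 /\ forall c x y, U x -> U y -> U (c *: x + y).

Lemma exists_complement (U : V -> Prop) : subspace U ->
  exists W : V -> Prop, [/\ subspace W, (forall x, W x -> U x -> x = 0) &
    forall x, exists u w, [/\ U u, W w & x = u + w]].
Proof.
move=> [U0 UD].
(* Zorn's lemma needs the empty chain, so [P] does not require [X 0]. *)
pose closed (X : set V) := forall c x y, X x -> X y -> X (c *: x + y).
pose P (X : set V) := closed X /\ forall x, X x -> U x -> x = 0.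
have [W [[WD WU] Wmax]] : exists W, P W /\ forall X, (W `<` X)%classic -> ~ P X.
  apply: Zorn_bigcup => Fam FamP Famtot; split.
    move=> c x y [X FX Xx] [Y FY Yy].
    have [XY|YX] := Famtot _ _ FX FY.
    - by exists Y => //; apply: (FamP _ FY).1 => //; exact: XY.
    - by exists X => //; apply: (FamP _ FX).1 => //; exact: YX.
  by move=> x [X FX Xx]; apply: (FamP _ FX).2.
have proper_ext (X : set V) x : (W `<=` X)%classic -> X x -> ~ W x -> (W `<` X)%classic.
  by move=> WX Xx Wx; split => // XW; apply: Wx; exact: XW.
have W0 : W 0.
  apply: contrapT => NW0; apply: (Wmax (eq^~ 0)).
  - apply: (proper_ext _ 0) => // x Wx; exfalso; apply: NW0.
    by rewrite -(addNr x) -scaleN1r; exact: WD.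
  - by split=> [c _ _ -> ->|//]; rewrite scaler0 addr0.
have Wdec x : exists u w, [/\ U u, W w & x = u + w].
  apply: contrapT => Nx.
  pose X y := exists c w, W w /\ y = w + c *: x.
  apply: (Wmax X); [apply: (proper_ext _ x)|split].
  - by move=> w Ww; exists 0, w; rewrite scale0r addr0.
  - by exists 1, 0; rewrite scale1r add0r.
  - by move=> Wx; apply: Nx; exists 0, x; rewrite add0r.
  - move=> c _ _ [c1 [w1 [Ww1 ->]]] [c2 [w2 [Ww2 ->]]].
    exists (c * c1 + c2), (c *: w1 + w2); split; first exact: WD.
    by rewrite scalerDr scalerA scalerDl addrACA.
  - move=> _ [c [w [Ww ->]]] Uy.
    have [c0|c0] := eqVneq c 0.
      by rewrite c0 scale0r addr0 in Uy *; exact: WU.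
    exfalso; apply: Nx; exists (c^-1 *: (w + c *: x)), (- c^-1 *: w); split.
    + by rewrite -[_ *: _]addr0; exact: UD.
    + by rewrite -[_ *: w]addr0; exact: WD.
    + by rewrite scalerDr scalerA mulVf // scale1r scaleNr addrAC subrr add0r.
by exists W.
Qed.

Lemma exists_linear_projection (U : V -> Prop) : subspace U ->
  exists P : V -> V, [/\ linear P, forall x, U (P x) & forall x, U x -> P x = x].
Proof.
move=> sU; have [W [[W0 WD] WU Wdec]] := exists_complement sU; have [U0 UD] := sU.
have dec_uniq u w u' w' : U u -> W w -> U u' -> W w' -> u + w = u' + w' -> u = u'.
  move=> Uu Ww Uu' Ww' E; apply/eqP; rewrite -subr_eq0; apply/eqP; apply: WU.
    have -> : u - u' = w' - w.
      by rewrite -[u](addrK w) E addrAC [u' + w']addrC addrK.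
    by rewrite addrC -scaleN1r; exact: WD.
  by rewrite addrC -scaleN1r; exact: UD.
pose P x := sval (cid (Wdec x)).
have PE x : exists w, [/\ U (P x), W w & x = P x + w] := svalP (cid (Wdec x)).
exists P; split.
- move=> c x y; have [wx [Ux Wx Ex]] := PE x; have [wy [Uy Wy Ey]] := PE y.
  have [w [Ucxy Ww Ecxy]] := PE (c *: x + y).
  apply: (dec_uniq _ w _ (c *: wx + wy)) => //; [exact: UD | exact: WD |].
  by rewrite -Ecxy {1}Ex {1}Ey scalerDr addrACA.
- by move=> x; have [w []] := PE x.
- move=> x Ux; have [w [UPx Ww E]] := PE x.
  by apply: esym; apply: (dec_uniq _ 0 _ w) => //; rewrite addr0.
Qed.

Lemma exists_scalar_eq1 (w : V) : w != 0 -> exists f : V -> F, scalar f /\ f w = 1.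
Proof.
move=> w0.
have sL : subspace (fun y => exists c, y = c *: w).
  split; first by exists 0; rewrite scale0r.
  by move=> k _ _ [c1 ->] [c2 ->]; exists (k * c1 + c2); rewrite scalerDl scalerA.
have [P [Plin PL Pid]] := exists_linear_projection sL.
pose c x := sval (cid (PL x)).
have cE x : P x = c x *: w := svalP (cid (PL x)).
have scalewI a b : a *: w = b *: w -> a = b.
  move/eqP; rewrite -subr_eq0 -scalerBl scaler_eq0 (negbTE w0) orbF subr_eq0.
  by move/eqP.
exists c; split.
  by move=> k x y; apply: scalewI; rewrite -cE Plin !cE scalerDl scalerA.
by apply: scalewI; rewrite -cE scale1r; apply: Pid; exists 1; rewrite scale1r.
Qed.

Lemma exists_separating_scalar n (a : 'I_n -> V) (v : V) :
  ~ (exists c : 'I_n -> F, v = \sum_i c i *: a i) ->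
  exists f : V -> F, [/\ scalar f, f v = 1 & forall i, f (a i) = 0].
Proof.
move=> Nv.
have sS : subspace (fun y => exists c : 'I_n -> F, y = \sum_i c i *: a i).
  split; first by exists (fun=> 0); rewrite big1 // => i _; rewrite scale0r.
  move=> k _ _ [c1 ->] [c2 ->]; exists (fun i => k * c1 i + c2 i).
  by rewrite scaler_sumr -big_split; apply: eq_bigr => i _; rewrite scalerDl scalerA.
have [P [Plin PS Pid]] := exists_linear_projection sS.
have w0 : v - P v != 0.
  by apply/negP; rewrite subr_eq0 => /eqP E; apply: Nv; rewrite E; exact: PS.
have [f [lf fw]] := exists_scalar_eq1 w0.
exists (fun x => f (x - P x)); split => //.
- by move=> k x y /=; rewrite Plin -lf scalerBr opprD addrACA.
- move=> i; rewrite Pid ?subrr ?(lin0 lf) //.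
  exists (fun j => (j == i)%:R).
  rewrite (bigD1 i) //= eqxx scale1r big1 ?addr0 // => j /negbTE ->.
  by rewrite scale0r.
Qed.

End Projections.

Section FunctionalsSeparate.
Variables (F : fieldType) (V N : lmodType F).

Lemma sum_apply_eq0 n (a : 'I_n -> V) (m : 'I_n -> V -> N) :
  (forall i, linear (m i)) ->
  (forall f : V -> F, scalar f -> forall u, \sum_i f (a i) *: m i u = 0) ->
  \sum_i m i (a i) = 0.
Proof.
(* Either a_0 lies in the span of the other a_i and is absorbed into their
   coefficients m_i, or some functional separates it from them, forcing m_0 = 0. *)
elim: n a m => [|n IHn] a m lm Hm; first by rewrite big_ord0.
rewrite big_ord_recl.
pose a' i := a (lift ord0 i); pose m' i := m (lift ord0 i).
have Hm' f (lf : scalar f) u :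
    f (a ord0) *: m ord0 u + \sum_i f (a' i) *: m' i u = 0.
  by have := Hm f lf u; rewrite big_ord_recl.
have [[c a0E]|Nspan] := pselect (exists c : 'I_n -> F, a ord0 = \sum_i c i *: a' i).
  pose m'' i u := m' i u + c i *: m ord0 u.
  have -> : m ord0 (a ord0) + \sum_i m' i (a' i) = \sum_i m'' i (a' i).
    rewrite big_split /= addrC a0E (lin_sum (lm ord0)); congr (_ + _).
    by apply: eq_bigr => i _; rewrite (linZ (lm ord0)).
  apply: IHn => [i k x y|f lf u].
    by rewrite /m'' /m' !lm !scalerDr addrACA !scalerA [c i * k]mulrC.
  apply: etrans (Hm' f lf u); rewrite [RHS]addrC a0E (lin_sum lf) scaler_suml -big_split.
  by apply: eq_bigr => i _; rewrite (scalZ lf) scalerDr scalerA [f _ * _]mulrC.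
have [f0 [lf0 f0a0 f0a']] := exists_separating_scalar Nspan.
have m0_eq0 u : m ord0 u = 0.
  have := Hm' f0 lf0 u; under eq_bigr do rewrite f0a' scale0r.
  by rewrite big1_eq f0a0 scale1r addr0.
rewrite m0_eq0 add0r; apply: (IHn a' m') => [i|f lf u]; first exact: lm.
have lf' : scalar (fun x => f x - f (a ord0) * f0 x).
  by move=> k x y /=; rewrite lf lf0; ring.
have := Hm' _ lf' u; rewrite f0a0 mulr1 subrr scale0r add0r.
by under eq_bigr do rewrite f0a' mulr0 subr0.
Qed.

Lemma big_apply_eq0 (T : Type) (l : seq T) (a : T -> V) (m : T -> V -> N) :
  (forall x, linear (m x)) ->
  (forall f : V -> F, scalar f -> forall u, \sum_(x <- l) f (a x) *: m x u = 0) ->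
  \sum_(x <- l) m x (a x) = 0.
Proof.
case: l => [|x0 l] lm Hm; first by rewrite big_nil.
set l' := x0 :: l; rewrite (big_nth x0) big_mkord.
apply: (sum_apply_eq0 (a := fun i => a (nth x0 l' i)) (m := fun i => m (nth x0 l' i)))
  => // f lf u.
by have := Hm f lf u; rewrite (big_nth x0) big_mkord.
Qed.

Lemma big_apply_eq (T : Type) (s t : seq T) (a : T -> V) (m : T -> V -> N) :
  (forall x, linear (m x)) ->
  (forall f : V -> F, scalar f -> forall u,
     \sum_(x <- s) f (a x) *: m x u = \sum_(x <- t) f (a x) *: m x u) ->
  \sum_(x <- s) m x (a x) = \sum_(x <- t) m x (a x).
Proof.
move=> lm Hm; apply/eqP; rewrite -subr_eq0; apply/eqP.
pose l := [seq (x, true) | x <- s] ++ [seq (x, false) | x <- t].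
have sum_l (G : T -> bool -> N) :
    \sum_(q <- l) G q.1 q.2 = \sum_(x <- s) G x true + \sum_(x <- t) G x false.
  by rewrite big_cat !big_map.
pose m' (q : T * bool) u := if q.2 then m q.1 u else - m q.1 u.
have := @big_apply_eq0 _ l (fun q => a q.1) m'.
rewrite (sum_l (fun x b => m' (x, b) (a x))) /= sumrN.
apply=> [[x []] k u v|f lf u]; rewrite /m' /= ?lm //.
  by rewrite opprD scalerN.
rewrite (sum_l (fun x b => f (a x) *: m' (x, b) u)) /=.
under [X in _ + X]eq_bigr do rewrite scalerN; rewrite sumrN.
by rewrite /m' /= (Hm f lf u) subrr.
Qed.

End FunctionalsSeparate.

Section TensorEquality.
Variable R : realType.
Local Notation C := R[i].

Definition trilinear (U V W N : lmodType C) (b : U -> V -> W -> N) :=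
  [/\ forall v w, linear (fun u => b u v w), forall u w, linear (fun v => b u v w)
    & forall u v, linear (b u v)].

Lemma scalar_comp (U W : lmodType C) (f : U -> C) (h : W -> U) :
  scalar f -> linear h -> scalar (fun x => f (h x)).
Proof. by move=> lf lh k x y; rewrite lh lf. Qed.

Lemma teq2P (V W : lmodType C) (s t : seq (V * W)) : teq2 s t <->
  forall (f : V -> C) (h : W -> C), scalar f -> scalar h ->
    \sum_(p <- s) f p.1 * h p.2 = \sum_(p <- t) f p.1 * h p.2.
Proof.
split=> [st f h lf lh|st f h]; first exact: (st (linear_pack lf) (linear_pack lh)).
by apply: st; exact: linearP.
Qed.

Lemma teq2_map (V W V' W' : lmodType C) (phi : V -> V') (psi : W -> W')
    (s t : seq (V * W)) : linear phi -> linear psi -> teq2 s t ->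
  teq2 [seq (phi p.1, psi p.2) | p <- s] [seq (phi p.1, psi p.2) | p <- t].
Proof.
move=> lphi lpsi /teq2P st; apply/teq2P => f h lf lh; rewrite !big_map.
exact: (st _ _ (scalar_comp lf lphi) (scalar_comp lh lpsi)).
Qed.

Lemma teq2_bilinear (V W N : lmodType C) (s t : seq (V * W)) (b : V -> W -> N) :
  bilinear_for *:%R *:%R b -> teq2 s t ->
  \sum_(p <- s) b p.1 p.2 = \sum_(p <- t) b p.1 p.2.
Proof.
move=> [lb1 lb2] /teq2P st.
apply: (big_apply_eq (a := fst) (m := fun p v => b v p.2)) => [p|f lf u].
  exact: lb1.
apply: (big_apply_eq (a := snd) (m := fun p w => f p.1 *: b u w)) => [p k x y|h lh w].
  by rewrite lb2 scalerDr !scalerA mulrC.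
under eq_bigr do rewrite scalerA mulrC.
under [RHS]eq_bigr do rewrite scalerA mulrC.
by rewrite -!scaler_suml st.
Qed.

Lemma teq3_trilinear (U V W N : lmodType C) (s t : seq (U * V * W))
    (b : U -> V -> W -> N) : trilinear b -> teq3 s t ->
  \sum_(p <- s) b p.1.1 p.1.2 p.2 = \sum_(p <- t) b p.1.1 p.1.2 p.2.
Proof.
move=> [lb1 lb2 lb3] st.
apply: (big_apply_eq (a := fun p => p.1.1) (m := fun p u => b u p.1.2 p.2)) => [p|e le u].
  exact: lb1.
apply: (big_apply_eq (a := fun p => p.1.2) (m := fun p v => e p.1.1 *: b u v p.2))
  => [p k x y|f lf v].
  by rewrite lb2 scalerDr !scalerA mulrC.
apply: (big_apply_eq (a := snd) (m := fun p w => f p.1.2 *: (e p.1.1 *: b u v w)))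
  => [p k x y|h lh w].
  by rewrite lb3 !scalerDr !scalerA; congr (_ *: _ + _); ring.
under eq_bigr do rewrite !scalerA mulrC [h _ * _]mulrC mulrA.
under [RHS]eq_bigr do rewrite !scalerA mulrC [h _ * _]mulrC mulrA.
by rewrite -!scaler_suml (st (linear_pack le) (linear_pack lf) (linear_pack lh)).
Qed.

End TensorEquality.

Lemma scaleC_mul (R : realType) (a b : R[i]) : a *: b = a * b.
Proof. by []. Qed.

Ltac linear_tac :=
  let k := fresh "k" in let x := fresh "x" in let y := fresh "y" in
  move=> k x y /=;
  repeat match goal with
  | L : GRing.linear_for _ ?f |- context [?f (?a *: ?u + ?v)] => rewrite (L a u v)
  end;
  do 3 rewrite ?scaleC_mul ?scalerDr ?scalerDl ?mulrDl ?mulrDr -?scalerAl -?scalerAr ?scalerA;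
  rewrite ?scaleC_mul;
  first [ by [] | ring
        | congr (_ + _); first [ by [] | congr (_ *: _); ring | ring ] ].

Section HopfAlgebra.
Variables (R : realType) (A : algType R[i]) (H : hopf_ops A).
Hypothesis HH : is_star_hopf H.
Local Notation C := R[i].
Local Notation cp := (cop H).
Local Notation eps := (cou H).
Local Notation S := (ant H).
Local Notation st := (star H).

Lemma cop_linear k x y : teq2 (cp (k *: x + y)) (scale_left k (cp x) ++ cp y).
Proof. by case: HH => [[]]. Qed.
Lemma cop_mul x y :
  teq2 (cp (x * y)) [seq (p.1 * q.1, p.2 * q.2) | p <- cp x, q <- cp y].
Proof. by case: HH => [[]]. Qed.
Lemma cop1 : teq2 (cp 1) [:: (1, 1)].
Proof. by case: HH => [[]]. Qed.
Lemma coassoc x : teq3 [seq (q.1, q.2, p.2) | p <- cp x, q <- cp p.1]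
                       [seq (p.1, q.1, q.2) | p <- cp x, q <- cp p.2].
Proof. by case: HH => [[]]. Qed.
Lemma eps_scalar : scalar eps.
Proof. by case: HH => _ [epsL _ _ _ _] _ _ k x y; rewrite epsL. Qed.
Lemma epsM x y : eps (x * y) = eps x * eps y.
Proof. by case: HH => _ []. Qed.
Lemma eps1 : eps 1 = 1.
Proof. by case: HH => _ []. Qed.
Lemma counitl x : \sum_(p <- cp x) eps p.1 *: p.2 = x.
Proof. by case: HH => _ []. Qed.
Lemma counitr x : \sum_(p <- cp x) eps p.2 *: p.1 = x.
Proof. by case: HH => _ []. Qed.
Lemma ant_linear : linear S.
Proof. by case: HH => _ _ [SL _ _] _ k x y; rewrite SL. Qed.
Lemma antipodel x : \sum_(p <- cp x) S p.1 * p.2 = eps x *: 1.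
Proof. by case: HH => _ _ []. Qed.
Lemma antipoder x : \sum_(p <- cp x) p.1 * S p.2 = eps x *: 1.
Proof. by case: HH => _ _ []. Qed.
Lemma star_semilinear k x y : st (k *: x + y) = k^* *: st x + st y.
Proof. by case: HH => _ _ _ []. Qed.
Lemma starK x : st (st x) = x.
Proof. by case: HH => _ _ _ []. Qed.
Lemma cop_star x : teq2 (cp (st x)) [seq (st p.1, st p.2) | p <- cp x].
Proof. by case: HH => _ _ _ []. Qed.

Section Sweedler.
Variable N : lmodType C.

Lemma sweedler_linear (b : A -> A -> N) : bilinear_for *:%R *:%R b ->
  forall k x y, \sum_(p <- cp (k *: x + y)) b p.1 p.2 =
    k *: \sum_(p <- cp x) b p.1 p.2 + \sum_(p <- cp y) b p.1 p.2.
Proof.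
move=> bb k x y; rewrite (teq2_bilinear bb (cop_linear k x y)) big_cat big_map.
by rewrite scaler_sumr; congr (_ + _); apply: eq_bigr => p _; rewrite (linZ (bb.1 _)).
Qed.

Lemma sweedler_mul (b : A -> A -> N) : bilinear_for *:%R *:%R b -> forall x y,
  \sum_(p <- cp (x * y)) b p.1 p.2 =
  \sum_(p <- cp x) \sum_(q <- cp y) b (p.1 * q.1) (p.2 * q.2).
Proof. by move=> bb x y; rewrite (teq2_bilinear bb (cop_mul x y)) big_allpairs_dep. Qed.

Lemma sweedler1 (b : A -> A -> N) : bilinear_for *:%R *:%R b ->
  \sum_(p <- cp 1) b p.1 p.2 = b 1 1.
Proof. by move=> bb; rewrite (teq2_bilinear bb cop1) big_seq1. Qed.

Lemma sweedler_coassoc (b : A -> A -> A -> N) : trilinear b -> forall x,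
  \sum_(p <- cp x) \sum_(q <- cp p.1) b q.1 q.2 p.2 =
  \sum_(p <- cp x) \sum_(q <- cp p.2) b p.1 q.1 q.2.
Proof.
by move=> bb x; have := teq3_trilinear bb (coassoc x); rewrite !big_allpairs_dep.
Qed.

Lemma sweedler_star (b : A -> A -> N) : bilinear_for *:%R *:%R b -> forall x,
  \sum_(p <- cp (st x)) b p.1 p.2 = \sum_(p <- cp x) b (st p.1) (st p.2).
Proof. by move=> bb x; rewrite (teq2_bilinear bb (cop_star x)) big_map. Qed.

End Sweedler.

Definition conv (f h : A -> C) x := \sum_(p <- cp x) f p.1 * h p.2.
Definition lslice (f : A -> C) x := \sum_(p <- cp x) f p.1 *: p.2.
Definition rslice (f : A -> C) x := \sum_(p <- cp x) f p.2 *: p.1.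
Definition econv (F G : A -> A) x := \sum_(p <- cp x) F p.1 * G p.2.
Definition eunit x : A := eps x *: 1.

Lemma conv_scalar f h : scalar f -> scalar h -> scalar (conv f h).
Proof.
move=> lf lh k x y; rewrite /conv (sweedler_linear (b := fun a c => f a * h c)) //.
by apply: pair => ?; linear_tac.
Qed.

Lemma lslice_linear f : scalar f -> linear (lslice f).
Proof.
move=> lf k x y; rewrite /lslice (sweedler_linear (b := fun a c => f a *: c)) //.
by apply: pair => ?; linear_tac.
Qed.

Lemma rslice_linear f : scalar f -> linear (rslice f).
Proof.
move=> lf k x y; rewrite /rslice (sweedler_linear (b := fun a c => f c *: a)) //.
by apply: pair => ?; linear_tac.
Qed.

Lemma econv_linear F G : linear F -> linear G -> linear (econv F G).
Proof.
move=> lF lG k x y; rewrite /econv (sweedler_linear (b := fun a c => F a * G c)) //.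
by apply: pair => ?; linear_tac.
Qed.

(* [scalar_comp] and [linear_comp] with the carrier fixed, so that [auto] can apply them. *)
Let scalar_compA (f : A -> C) (h : A -> A) :
  scalar f -> linear h -> scalar (fun x => f (h x)).
Proof. exact: scalar_comp. Qed.
Let linear_compA (F G : A -> A) : linear F -> linear G -> linear (fun x => F (G x)).
Proof. exact: linear_comp. Qed.

Create HintDb linearity.
Hint Resolve conv_scalar lslice_linear rslice_linear eps_scalar ant_linear
  scalar_compA linear_compA : linearity.
Ltac linearity := solve [auto with linearity].

Lemma conv_assoc f g h : scalar f -> scalar g -> scalar h ->
  conv (conv f g) h = conv f (conv g h).
Proof.
move=> lf lg lh; apply: funext => x; rewrite /conv.
under eq_bigr do rewrite mulr_suml.
rewrite (sweedler_coassoc (b := fun a b c => f a * g b * h c)); last by split=> *; linear_tac.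
by apply: eq_bigr => p _; rewrite mulr_sumr; apply: eq_bigr => q _; rewrite mulrA.
Qed.

Lemma conv_epsl f : scalar f -> conv eps f = f.
Proof.
move=> lf; apply: funext => x; rewrite /conv -{2}(counitl x) (lin_sum lf).
by apply: eq_bigr => p _; rewrite (scalZ lf).
Qed.

Lemma conv_epsr f : scalar f -> conv f eps = f.
Proof.
move=> lf; apply: funext => x; rewrite /conv -{2}(counitr x) (lin_sum lf).
by apply: eq_bigr => p _; rewrite (scalZ lf) mulrC.
Qed.

Lemma scalar_lslice f h : scalar h -> forall x, h (lslice f x) = conv f h x.
Proof. by move=> lh x; rewrite /lslice (lin_sum lh); apply: eq_bigr => p _; rewrite (scalZ lh). Qed.

Lemma scalar_rslice f h : scalar h -> forall x, h (rslice f x) = conv h f x.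
Proof.
by move=> lh x; rewrite /rslice (lin_sum lh); apply: eq_bigr => p _; rewrite (scalZ lh) mulrC.
Qed.

Lemma lslice_lslice f g x : scalar f -> scalar g ->
  lslice f (lslice g x) = lslice (conv g f) x.
Proof.
move=> lf lg; rewrite {2}/lslice (lin_sum (lslice_linear lf)).
under eq_bigr do rewrite (linZ (lslice_linear lf)) /lslice scaler_sumr.
under eq_bigr do under eq_bigr do rewrite scalerA.
rewrite -(sweedler_coassoc (b := fun a b c => (g a * f b) *: c)); last by split=> *; linear_tac.
by apply: eq_bigr => p _; rewrite /conv scaler_suml.
Qed.

Lemma rslice_rslice f g x : scalar f -> scalar g ->
  rslice f (rslice g x) = rslice (conv f g) x.
Proof.
move=> lf lg; rewrite {2}/rslice (lin_sum (rslice_linear lf)).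
under eq_bigr do rewrite (linZ (rslice_linear lf)) /rslice scaler_sumr.
under eq_bigr do under eq_bigr do rewrite scalerA.
rewrite (sweedler_coassoc (b := fun a b c => (g c * f b) *: a)); last by split=> *; linear_tac.
apply: eq_bigr => p _; rewrite /conv scaler_suml.
by apply: eq_bigr => q _; rewrite mulrC.
Qed.

Lemma lslice_rsliceC f g x : scalar f -> scalar g ->
  lslice f (rslice g x) = rslice g (lslice f x).
Proof.
move=> lf lg; rewrite {1}/rslice (lin_sum (lslice_linear lf)).
rewrite {2}/lslice (lin_sum (rslice_linear lg)).
under eq_bigr do rewrite (linZ (lslice_linear lf)) /lslice scaler_sumr.
under eq_bigr do under eq_bigr do rewrite scalerA.
under [RHS]eq_bigr do rewrite (linZ (rslice_linear lg)) /rslice scaler_sumr.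
under [RHS]eq_bigr do under eq_bigr do rewrite scalerA.
rewrite (sweedler_coassoc (b := fun a b c => (g c * f a) *: b)); last by split=> *; linear_tac.
by apply: eq_bigr => p _; apply: eq_bigr => q _; rewrite mulrC.
Qed.

Lemma lslice_eps x : lslice eps x = x.
Proof. exact: counitl. Qed.
Lemma rslice_eps x : rslice eps x = x.
Proof. exact: counitr. Qed.

Lemma eps_lslice f x : scalar f -> eps (lslice f x) = f x.
Proof. by move=> lf; rewrite scalar_lslice ?conv_epsr //; exact: eps_scalar. Qed.
Lemma eps_rslice f x : scalar f -> eps (rslice f x) = f x.
Proof. by move=> lf; rewrite scalar_rslice ?conv_epsl //; exact: eps_scalar. Qed.

Lemma lslice_mul f : scalar f -> {morph f : a b / a * b} ->
  {morph lslice f : x y / x * y}.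
Proof.
move=> lf fM x y; rewrite /lslice (sweedler_mul (b := fun a c => f a *: c)); last first.
  by apply: pair => ?; linear_tac.
rewrite mulr_suml; apply: eq_bigr => p _; rewrite mulr_sumr; apply: eq_bigr => q _.
by rewrite fM -scalerAl -scalerAr scalerA.
Qed.

Lemma rslice_mul f : scalar f -> {morph f : a b / a * b} ->
  {morph rslice f : x y / x * y}.
Proof.
move=> lf fM x y; rewrite /rslice (sweedler_mul (b := fun a c => f c *: a)); last first.
  by apply: pair => ?; linear_tac.
rewrite mulr_suml; apply: eq_bigr => p _; rewrite mulr_sumr; apply: eq_bigr => q _.
by rewrite fM -scalerAl -scalerAr scalerA.
Qed.

Lemma lslice1 f : scalar f -> f 1 = 1 -> lslice f 1 = 1.
Proof.
move=> lf f1; rewrite /lslice (sweedler1 (b := fun a c => f a *: c)) ?f1 ?scale1r //.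
by apply: pair => ?; linear_tac.
Qed.

Lemma rslice1 f : scalar f -> f 1 = 1 -> rslice f 1 = 1.
Proof.
move=> lf f1; rewrite /rslice (sweedler1 (b := fun a c => f c *: a)) ?f1 ?scale1r //.
by apply: pair => ?; linear_tac.
Qed.

Lemma eps_ant x : eps (S x) = eps x.
Proof.
have := congr1 eps (antipodel x); rewrite (scalZ eps_scalar) eps1 mulr1 => <-.
rewrite -{1}(counitr x) (lin_sum ant_linear) !(lin_sum eps_scalar).
by apply: eq_bigr => p _; rewrite (linZ ant_linear) (scalZ eps_scalar) epsM mulrC.
Qed.

Lemma econv_assoc F G K : linear F -> linear G -> linear K ->
  econv F (econv G K) = econv (econv F G) K.
Proof.
move=> lF lG lK; apply: funext => x; rewrite /econv.
under [RHS]eq_bigr do rewrite mulr_suml.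
rewrite (sweedler_coassoc (b := fun a b c => F a * G b * K c)); last by split=> *; linear_tac.
by apply: eq_bigr => p _; rewrite mulr_sumr; apply: eq_bigr => q _; rewrite mulrA.
Qed.

Lemma econv_eunitl F : linear F -> econv eunit F = F.
Proof.
move=> lF; apply: funext => x; rewrite /econv /eunit -{2}(counitl x) (lin_sum lF).
by apply: eq_bigr => p _; rewrite (linZ lF) -scalerAl mul1r.
Qed.

Lemma econv_eunitr F : linear F -> econv F eunit = F.
Proof.
move=> lF; apply: funext => x; rewrite /econv /eunit -{2}(counitr x) (lin_sum lF).
by apply: eq_bigr => p _; rewrite (linZ lF) -scalerAr mulr1.
Qed.

Lemma econv_inv_uniq F G G' : linear F -> linear G -> linear G' ->
  econv F G = eunit -> econv G' F = eunit -> G' = G.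
Proof.
move=> lF lG lG' FG G'F.
by rewrite -(econv_eunitr lG') -FG econv_assoc // G'F econv_eunitl.
Qed.

Lemma econv_id_ant : econv id S = eunit.
Proof. exact/funext/antipoder. Qed.

Lemma econv_lslice f F x : scalar f -> linear F ->
  econv (lslice f) F x = econv id F (lslice f x).
Proof.
move=> lf lF; have lid : linear (@id A) by [].
rewrite {2}/lslice (lin_sum (econv_linear lid lF)).
under [RHS]eq_bigr do rewrite (linZ (econv_linear lid lF)) /econv scaler_sumr.
rewrite /econv -(sweedler_coassoc (b := fun a b c => f a *: (b * F c))); last first.
  by split=> *; linear_tac.
by apply: eq_bigr => p _; rewrite /lslice mulr_suml; apply: eq_bigr => q _; rewrite scalerAl.
Qed.

Lemma econv_rslice f F x : scalar f -> linear F ->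
  econv (rslice f) F x = econv id (fun a => F (lslice f a)) x.
Proof.
move=> lf lF; rewrite /econv.
under eq_bigr do rewrite /rslice mulr_suml.
under eq_bigr do under eq_bigr do rewrite -scalerAl.
rewrite (sweedler_coassoc (b := fun a b c => f b *: (a * F c))); last by split=> *; linear_tac.
apply: eq_bigr => p _; rewrite /lslice (lin_sum lF) mulr_sumr.
by apply: eq_bigr => q _; rewrite (linZ lF) scalerAr.
Qed.

Lemma econv_id_rslice f F x : scalar f -> linear F ->
  econv id (fun a => F (rslice f a)) x = econv id F (rslice f x).
Proof.
move=> lf lF; have lid : linear (@id A) by [].
rewrite {2}/rslice (lin_sum (econv_linear lid lF)).
under [RHS]eq_bigr do rewrite (linZ (econv_linear lid lF)) /econv scaler_sumr.
rewrite /econv (sweedler_coassoc (b := fun a b c => f c *: (a * F b))); last first.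
  by split=> *; linear_tac.
apply: eq_bigr => p _; rewrite /rslice (lin_sum lF) mulr_sumr.
by apply: eq_bigr => q _; rewrite (linZ lF) scalerAr.
Qed.

Lemma econv_ant_morph F : linear F -> {morph F : x y / x * y} -> F 1 = 1 ->
  econv (fun a => F (S a)) F = eunit.
Proof.
move=> lF FM F1; apply: funext => x; rewrite /econv.
by under eq_bigr do rewrite -FM; rewrite -(lin_sum lF) antipodel (linZ lF) F1.
Qed.

Section AntipodeSlices.
Variable f : A -> C.
Hypotheses (lf : scalar f) (fM : {morph f : x y / x * y}) (f1 : f 1 = 1).
Local Notation fS := (fun a => f (S a)).
Hypothesis f_conv_ant : conv f fS = eps.

Lemma lslice_ant x : lslice f (S x) = S (rslice fS x).
Proof.
have lfS : scalar fS by linearity.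
suff E : (fun a => lslice f (S a)) = (fun a => S (rslice fS a)).
  exact: (congr1 (fun F => F x) E).
apply: (econv_inv_uniq (F := lslice f)); try linearity.
  apply: funext => y; rewrite econv_lslice ?econv_id_rslice //; try linearity.
  by rewrite econv_id_ant /eunit eps_rslice // (scalar_lslice _ lfS) f_conv_ant.
apply: econv_ant_morph; [linearity | exact: lslice_mul | exact: lslice1].
Qed.

Lemma rslice_ant x : rslice f (S x) = S (lslice fS x).
Proof.
have lfS : scalar fS by linearity.
suff E : (fun a => rslice f (S a)) = (fun a => S (lslice fS a)).
  exact: (congr1 (fun F => F x) E).
apply: (econv_inv_uniq (F := rslice f)); try linearity.
  apply: funext => y; rewrite econv_rslice; try linearity.
  suff -> : (fun a => S (lslice fS (lslice f a))) = S.
    by rewrite econv_id_ant.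
  by apply: funext => a; rewrite lslice_lslice // f_conv_ant lslice_eps.
apply: econv_ant_morph; [linearity | exact: rslice_mul | exact: rslice1].
Qed.

Hypothesis f_ant_conv : conv fS f = eps.

Lemma ant_lslice x : S (lslice f x) = rslice fS (S x).
Proof.
have lfS : scalar fS by linearity.
have := rslice_ant (lslice f x); rewrite lslice_lslice // f_conv_ant lslice_eps => <-.
by rewrite rslice_rslice // f_ant_conv rslice_eps.
Qed.

Lemma alg_char_ant2 x : f (S (S x)) = f x.
Proof.
have lfS : scalar fS by linearity.
by have := congr1 eps (ant_lslice x); rewrite eps_ant eps_lslice // eps_rslice // => ->.
Qed.

End AntipodeSlices.

Lemma starD x y : st (x + y) = st x + st y.
Proof. by rewrite -[x]scale1r star_semilinear rmorph1 !scale1r. Qed.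
Lemma star0 : st 0 = 0.
Proof. by apply: (@addrI _ (st 0)); rewrite -starD !addr0. Qed.
Lemma starZ k x : st (k *: x) = k^* *: st x.
Proof. by rewrite -[k *: x]addr0 star_semilinear star0 addr0. Qed.
Lemma star_sum I (r : seq I) (F : I -> A) :
  st (\sum_(i <- r) F i) = \sum_(i <- r) st (F i).
Proof. exact: (big_morph _ starD star0). Qed.

Definition conj_star (f : A -> C) a := (f (st a))^*.

Lemma conj_star_scalar f : scalar f -> scalar (conj_star f).
Proof. by move=> lf k x y; rewrite /conj_star star_semilinear lf rmorphD rmorphM /= conjCK. Qed.

Lemma lslice_star f y : scalar f -> lslice f (st y) = st (lslice (conj_star f) y).
Proof.
move=> lf; rewrite /lslice (sweedler_star (b := fun a c => f a *: c)); last first.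
  by apply: pair => ?; linear_tac.
by rewrite star_sum; apply: eq_bigr => p _; rewrite starZ /conj_star conjCK.
Qed.

Lemma rslice_star f y : scalar f -> rslice f (st y) = st (rslice (conj_star f) y).
Proof.
move=> lf; rewrite /rslice (sweedler_star (b := fun a c => f c *: a)); last first.
  by apply: pair => ?; linear_tac.
by rewrite star_sum; apply: eq_bigr => p _; rewrite starZ /conj_star conjCK.
Qed.

Lemma eps_star y : eps (st y) = (eps y)^*.
Proof.
have lbar := conj_star_scalar eps_scalar.
have -> : eps y = eps (lslice (conj_star eps) y).
  by rewrite -[y in LHS]starK -[lslice _ _]starK -lslice_star ?lslice_eps //; exact: eps_scalar.
by rewrite eps_lslice // /conj_star conjCK.
Qed.

Lemma Ad_slices f x : scalar f -> Ad H f x = rslice f (lslice (fun a => f (S a)) x).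
Proof.
move=> lf; rewrite /Ad /lslice (lin_sum (rslice_linear lf)); apply: eq_bigr => p _.
by rewrite (linZ (rslice_linear lf)) /rslice scaler_sumr; apply: eq_bigr => q _; rewrite scalerA.
Qed.

Lemma conv_lslice f h phi x : scalar f -> scalar h -> scalar phi ->
  conv f h (lslice phi x) = conv (conv phi f) h x.
Proof. by move=> lf lh lphi; rewrite scalar_lslice ?conv_assoc //; linearity. Qed.

Lemma conv_rslice f h phi x : scalar f -> scalar h -> scalar phi ->
  conv f h (rslice phi x) = conv f (conv h phi) x.
Proof. by move=> lf lh lphi; rewrite scalar_rslice ?conv_assoc //; linearity. Qed.

Lemma cop_rslice phi x : scalar phi ->
  teq2 (cp (rslice phi x)) [seq (p.1, rslice phi p.2) | p <- cp x].
Proof.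
move=> lphi; apply/teq2P => f h lf lh; rewrite big_map.
under [RHS]eq_bigr do rewrite scalar_rslice //.
exact: conv_rslice.
Qed.

Lemma cop_rslice_lslice phi psi x : scalar phi -> scalar psi -> conv phi psi = eps ->
  teq2 (cp (rslice phi (lslice psi x)))
       [seq (rslice phi (lslice psi p.1), rslice phi (lslice psi p.2)) | p <- cp x].
Proof.
(* Both sides evaluate to (psi * f * h * phi) x in the convolution algebra. *)
move=> lphi lpsi phipsi; apply/teq2P => f h lf lh; rewrite big_map /=.
have slicesE k : scalar k -> (fun a => k (rslice phi (lslice psi a))) = conv psi (conv k phi).
  by move=> lk; apply: funext => a; rewrite scalar_rslice ?scalar_lslice //; linearity.
rewrite -[LHS]/(conv f h (rslice phi (lslice psi x))).
rewrite -[RHS]/(conv (fun a => f (rslice phi (lslice psi a)))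
                     (fun a => h (rslice phi (lslice psi a))) x).
rewrite conv_rslice ?conv_lslice ?slicesE //; try linearity.
rewrite !conv_assoc; try linearity.
by rewrite -[conv phi (conv psi _)]conv_assoc ?phipsi ?conv_epsl //; linearity.
Qed.

Section HomogeneousSpace.
Variables (K : lmodType C) (rho : A -> K).
Hypothesis lrho : linear rho.

Lemma homspP a : homsp H rho a <->
  forall f h, scalar f -> scalar h -> conv f (fun z => h (rho z)) a = f a * h (rho 1).
Proof.
rewrite /homsp teq2P; split=> Ha f h lf lh; have := Ha f h lf lh;
  by rewrite big_map big_seq1.
Qed.

Lemma homsp_subspace : subspace (homsp H rho).
Proof.
split.
  apply/homspP => f h lf lh.
  by rewrite (lin0 (conv_scalar lf (scalar_comp lh lrho))) (lin0 lf) mul0r.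
move=> c x y /homspP Hx /homspP Hy; apply/homspP => f h lf lh.
by rewrite (conv_scalar lf (scalar_comp lh lrho)) Hx // Hy // lf mulrDl mulrA.
Qed.

Lemma homsp_lslice phi b : scalar phi -> homsp H rho b -> homsp H rho (lslice phi b).
Proof.
move=> lphi /homspP Hb; apply/homspP => f h lf lh.
rewrite conv_lslice ?Hb ?scalar_lslice //; try linearity.
exact: scalar_comp.
Qed.

Lemma homsp_left_coideal a : homsp H rho a ->
  exists s, teq2 s (cp a) /\ forall p, p \in s -> homsp H rho p.2.
Proof.
move=> Ba; have [P [lP PB Pid]] := exists_linear_projection homsp_subspace.
exists [seq (p.1, P p.2) | p <- cp a]; split; last by move=> p /mapP[q _ ->]; exact: PB.
apply/teq2P => f h lf lh; rewrite big_map /=.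
have lhP : scalar (fun z => h (P z)) by exact: scalar_comp.
rewrite -/(conv f (fun z => h (P z)) a) -/(conv f h a) -!scalar_lslice //.
by rewrite Pid //; exact: homsp_lslice.
Qed.

End HomogeneousSpace.

Section Character.
Variable g : A -> C.
Hypothesis g_char : is_character H g.
Local Notation gS := (fun a => g (S a)).

Lemma char_scalar : scalar g.
Proof. by case: g_char => gL _ _ _ k x y; rewrite gL. Qed.
Lemma char_mul : {morph g : x y / x * y}.
Proof. by case: g_char. Qed.
Lemma char1 : g 1 = 1.
Proof. by case: g_char. Qed.
Lemma char_star x : g (st x) = (g x)^*.
Proof. by case: g_char. Qed.

Lemma char_ant_scalar : scalar gS.
Proof. exact: scalar_comp char_scalar ant_linear. Qed.

Hint Resolve char_scalar char_ant_scalar : linearity.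

Lemma conv_char_ant : conv g gS = eps.
Proof.
apply: funext => x; rewrite /conv; under eq_bigr do rewrite -char_mul.
by rewrite -(lin_sum char_scalar) antipoder (scalZ char_scalar) char1 mulr1.
Qed.

Lemma conv_ant_char : conv gS g = eps.
Proof.
apply: funext => x; rewrite /conv; under eq_bigr do rewrite -char_mul.
by rewrite -(lin_sum char_scalar) antipodel (scalZ char_scalar) char1 mulr1.
Qed.

Lemma char_ant2 x : g (S (S x)) = g x.
Proof. exact: alg_char_ant2 char_scalar char_mul char1 conv_char_ant conv_ant_char x. Qed.

Lemma conj_star_char : conj_star g = g.
Proof. by apply: funext => a; rewrite /conj_star char_star conjCK. Qed.

(* [conj_star gS] is a left convolution inverse of [g], hence equals [gS]. *)
Lemma conj_star_char_ant : conj_star gS = gS.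
Proof.
have lbar : scalar (conj_star gS) by apply: conj_star_scalar; linearity.
have barK : conv (conj_star gS) g = eps.
  apply: funext => x; rewrite /conv /conj_star.
  transitivity ((\sum_(p <- cp x) g (S (st p.1)) * g (st p.2))^*).
    by rewrite rmorph_sum; apply: eq_bigr => p _; rewrite rmorphM /= char_star conjCK.
  rewrite -(sweedler_star (b := fun a c => g (S a) * g c)); last first.
    by move: char_scalar ant_linear => lg lS; apply: pair => ?; linear_tac.
  by rewrite -/(conv gS g (st x)) conv_ant_char eps_star conjCK.
rewrite -(conv_epsr lbar) -conv_char_ant -conv_assoc; try linearity.
by rewrite barK conv_epsl; linearity.
Qed.

Definition Adg x := rslice g (lslice gS x).
Definition Adi x := rslice gS (lslice g x).

Lemma AdE : Ad H g = Adg.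
Proof. by apply: funext => x; rewrite Ad_slices //; exact: char_scalar. Qed.

Lemma Ad_antE : Ad H gS = Adi.
Proof.
apply: funext => x; rewrite Ad_slices; last linearity.
by rewrite /Adi; congr (rslice _ (lslice _ x)); apply: funext => a; rewrite char_ant2.
Qed.

Lemma Adg_linear : linear Adg.
Proof. rewrite /Adg; linearity. Qed.
Lemma Adi_linear : linear Adi.
Proof. rewrite /Adi; linearity. Qed.

Lemma lslice_charK : cancel (lslice g) (lslice gS).
Proof. by move=> x; rewrite lslice_lslice ?conv_char_ant ?lslice_eps //; linearity. Qed.
Lemma lslice_char_antK : cancel (lslice gS) (lslice g).
Proof. by move=> x; rewrite lslice_lslice ?conv_ant_char ?lslice_eps //; linearity. Qed.
Lemma rslice_charK : cancel (rslice g) (rslice gS).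
Proof. by move=> x; rewrite rslice_rslice ?conv_ant_char ?rslice_eps //; linearity. Qed.
Lemma rslice_char_antK : cancel (rslice gS) (rslice g).
Proof. by move=> x; rewrite rslice_rslice ?conv_char_ant ?rslice_eps //; linearity. Qed.

Lemma AdiK : cancel Adi Adg.
Proof.
by move=> x; rewrite /Adg /Adi lslice_rsliceC ?lslice_charK ?rslice_char_antK //; linearity.
Qed.
Lemma AdgK : cancel Adg Adi.
Proof.
by move=> x; rewrite /Adg /Adi lslice_rsliceC ?lslice_char_antK ?rslice_charK //; linearity.
Qed.

Lemma Adi_preim (P : A -> Prop) x : P (Adi x) <-> exists y, P y /\ x = Adg y.
Proof. by split=> [Px|[y [Py ->]]]; [exists (Adi x); rewrite AdiK | rewrite AdgK]. Qed.

Lemma rslice_char_ant_mul : {morph rslice gS : x y / x * y}.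
Proof.
move=> x y; rewrite -{1}(rslice_char_antK x) -{1}(rslice_char_antK y).
by rewrite -(rslice_mul char_scalar char_mul) rslice_charK.
Qed.

Lemma Adi_mul : {morph Adi : x y / x * y}.
Proof. by move=> x y; rewrite /Adi (lslice_mul char_scalar char_mul) rslice_char_ant_mul. Qed.
Lemma Adi1 : Adi 1 = 1.
Proof.
by rewrite /Adi (lslice1 char_scalar char1) -{1}(rslice1 char_scalar char1) rslice_charK.
Qed.

Lemma eps_Adi x : eps (Adi x) = eps x.
Proof.
rewrite /Adi eps_rslice; last linearity.
rewrite (ant_lslice char_scalar char_mul char1 conv_char_ant conv_ant_char).
by rewrite scalar_rslice ?conv_char_ant ?eps_ant //; linearity.
Qed.

Lemma cop_Adg x : teq2 (cp (Adg x)) [seq (Adg p.1, Adg p.2) | p <- cp x].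
Proof. by apply: cop_rslice_lslice; try linearity; exact: conv_char_ant. Qed.
Lemma cop_Adi x : teq2 (cp (Adi x)) [seq (Adi p.1, Adi p.2) | p <- cp x].
Proof. by apply: cop_rslice_lslice; try linearity; exact: conv_ant_char. Qed.

Lemma Adi_tau x : Adi (tau H x) = tau H (Adi x).
Proof.
rewrite /tau /Adi lslice_star ?conj_star_char ?rslice_star ?conj_star_char_ant; try linearity.
congr st; rewrite (lslice_ant char_scalar char_mul char1 conv_char_ant).
rewrite -(ant_lslice char_scalar char_mul char1 conv_char_ant conv_ant_char).
by rewrite lslice_rsliceC //; linearity.
Qed.

Section CoisotropicSubgroup.
Variables (K : lmodType C) (O : cqs_ops A K) (r : A -> K).
Hypothesis r_rcqs : is_rcqs H O r.

Lemma r_linear : linear r.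
Proof. by case: r_rcqs => _ _ [rL _ _ _] _ k x y; rewrite rL. Qed.
Lemma r_surj k : exists x, r x = k.
Proof. by case: r_rcqs => _ _ [_ rS _ _] _. Qed.
Lemma r_cop x : teq2 (kcop O (r x)) [seq (r p.1, r p.2) | p <- cp x].
Proof. by case: r_rcqs => _ _ [_ _ rC _] _; case: (rC x). Qed.
Lemma r_cou x : kcou O (r x) = eps x.
Proof. by case: r_rcqs => _ _ [_ _ rC _] _; case: (rC x). Qed.
Lemma r_mul x y : r (x * y) = kact O (r x) y.
Proof. by case: r_rcqs => _ _ [_ _ _ rM] _. Qed.
Lemma r_tau x : ktau O (r x) = r (tau H x).
Proof. by case: r_rcqs => _ _ _ [_ rT]. Qed.

Lemma kact0 y : kact O 0 y = 0.
Proof.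
case: r_rcqs => _ [kactL _ _ _] _ _.
by apply: (lin0 (f := fun k => kact O k y)) => a k l; rewrite kactL.
Qed.
Lemma ktau0 : ktau O 0 = 0.
Proof.
case: r_rcqs => _ _ _ [ktauL _].
have := ktauL 1 0 0; rewrite scale1r addr0 rmorph1 scale1r => E.
by apply: (@addrI _ (ktau O 0)); rewrite -E addr0.
Qed.
Lemma kcou0 : kcou O 0 = 0.
Proof.
case: r_rcqs => [[_ kcouL _ _ _]] _ _ _.
by apply: (lin0 (f := kcou O)) => a k l; rewrite kcouL.
Qed.

Lemma scalar_factor_r (X : A -> C) : scalar X -> (forall a, r a = 0 -> X a = 0) ->
  exists X' : K -> C, scalar X' /\ forall a, X' (r a) = X a.
Proof.
move=> lX Xker; pose pre k := sval (cid (r_surj k)).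
have preE k : r (pre k) = k := svalP (cid (r_surj k)).
have Xpre a : X (pre (r a)) = X a.
  apply/eqP; rewrite -subr_eq0 -(linN lX) -(linD lX); apply/eqP; apply: Xker.
  by rewrite (linD r_linear) (linN r_linear) preE subrr.
exists (fun k => X (pre k)); split => // c k l.
by rewrite -{1}(preE k) -{1}(preE l) -r_linear Xpre lX.
Qed.

Lemma conv_ker_eq0 F G y : scalar F -> scalar G ->
    (forall a, r a = 0 -> F a = 0) -> (forall a, r a = 0 -> G a = 0) ->
  r y = 0 -> conv F G y = 0.
Proof.
move=> lF lG Fker Gker ry.
have [F' [lF' F'E]] := scalar_factor_r lF Fker.
have [G' [lG' G'E]] := scalar_factor_r lG Gker.
have convE z : conv F G z = \sum_(p <- kcop O (r z)) F' p.1 * G' p.2.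
  rewrite ((teq2P _ _).1 (r_cop z) F' G' lF' lG') big_map /conv.
  by apply: eq_bigr => p _; rewrite /= F'E G'E.
by rewrite convE ry -(lin0 r_linear) -convE (lin0 (conv_scalar lF lG)).
Qed.

Lemma ker_coideal y : r y = 0 ->
  exists s, teq2 s (cp y) /\ forall p, p \in s -> r p.1 = 0 \/ r p.2 = 0.
Proof.
move=> ry.
have kerS : subspace (fun a => r a = 0).
  split; first exact: (lin0 r_linear).
  by move=> c a b ra rb; rewrite r_linear ra rb scaler0 addr0.
have [P [lP Pker Pid]] := exists_linear_projection kerS.
pose Q a := a - P a.
have lQ : linear Q by move=> k a b; rewrite /Q lP scalerBr opprD addrACA.
have PQ a : a = P a + Q a by rewrite /Q addrC subrK.
exists ([seq (P p.1, p.2) | p <- cp y] ++ [seq (Q p.1, P p.2) | p <- cp y]); split.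
  apply/teq2P => f h lf lh; rewrite big_cat !big_map /=.
  have QQ : conv (fun a => f (Q a)) (fun a => h (Q a)) y = 0.
    apply: (conv_ker_eq0 _ _ _ _ ry); try linearity.
      by move=> a ra; rewrite /Q Pid // subrr (lin0 lf).
    by move=> a ra; rewrite /Q Pid // subrr (lin0 lh).
  transitivity (\sum_(p <- cp y) f p.1 * h p.2 - conv (fun a => f (Q a)) (fun a => h (Q a)) y).
    rewrite /conv -sumrB -big_split /=; apply: eq_bigr => p _.
    have fE : f p.1 = f (P p.1) + f (Q p.1) by rewrite -(linD lf) -PQ.
    have hE : h p.2 = h (P p.2) + h (Q p.2) by rewrite -(linD lh) -PQ.
    by rewrite fE hE; ring.
  by rewrite QQ subr0.
by move=> p; rewrite mem_cat => /orP[]/mapP[q _ ->]; [left|right]; exact: Pker.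
Qed.

Local Notation rg := (fun x => r (Adi x)).

Lemma ker_rg_coideal : is_tau_rideal_coideal H (fun x => rg x = 0).
Proof.
have lAdi := Adi_linear.
split.
- by rewrite (lin0 lAdi) (lin0 r_linear).
- by move=> a x y rx ry; rewrite lAdi r_linear rx ry scaler0 addr0.
- by move=> x y rx; rewrite Adi_mul r_mul rx kact0.
- by move=> x rx; rewrite Adi_tau -r_tau rx ktau0.
move=> x rx; split; first by rewrite -eps_Adi -r_cou rx kcou0.
have [s [sE sker]] := ker_coideal rx.
exists [seq (Adg p.1, Adg p.2) | p <- s]; split.
  move=> f h; rewrite -(AdiK x) (cop_Adg (Adi x) f h).
  exact: (teq2_map Adg_linear Adg_linear sE f h).
by move=> _ /mapP[p ps ->] /=; rewrite !AdgK; exact: sker.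
Qed.

Lemma rcqs_rg : exists (Kg : lmodType C) (Og : cqs_ops A Kg) (r' : A -> Kg),
  is_rcqs H Og r' /\ forall x, r' x = 0 <-> rg x = 0.
Proof.
exists K, (CqsOps (kcop O) (kcou O) (fun k x => kact O k (Adi x)) (ktau O)), rg.
split => //; have lAdi := Adi_linear.
case: r_rcqs => kcoalg [kactL1 kactL2 kact1 kactM] _ [ktauL _].
split => //=.
- split => //.
  + by move=> a k x y; rewrite lAdi kactL2.
  + by move=> k; rewrite Adi1 kact1.
  + by move=> k x y; rewrite kactM Adi_mul.
- split.
  + by move=> a x y; rewrite lAdi r_linear.
  + by move=> k; have [z <-] := r_surj k; exists (Adg z); rewrite AdgK.
  + move=> x; split; last by rewrite r_cou eps_Adi.
    move=> f h; rewrite (r_cop (Adi x) f h).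
    by have := teq2_map r_linear r_linear (cop_Adi x) f h; rewrite -map_comp.
  + by move=> x y; rewrite Adi_mul r_mul.
- by split => // x; rewrite r_tau Adi_tau.
Qed.

Lemma homsp_rg a : homsp H rg a <-> homsp H r (Adi a).
Proof.
rewrite !homspP.
have convAdi f h : scalar f -> scalar h ->
    conv f (fun z => h (r z)) (Adi a) = conv (fun z => f (Adi z)) (fun z => h (rg z)) a.
  move=> lf lh; have := (teq2P _ _).1 (cop_Adi a) f _ lf (scalar_comp lh r_linear).
  by rewrite big_map.
split=> Ha f h lf lh.
  by rewrite convAdi // Ha ?Adi1 //; exact: scalar_comp Adi_linear.
have lfg : scalar (fun z => f (Adg z)) by exact: scalar_comp Adg_linear.
have fE : (fun z => f (Adg (Adi z))) = f by apply: funext => z; rewrite AdiK.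
by have := convAdi _ h lfg lh; rewrite Ha // AdiK Adi1 fE => <-.
Qed.

Lemma homsp_rg_Ad a : homsp H rg a <-> exists b, homsp H r b /\ a = Adg b.
Proof. by rewrite homsp_rg; exact: Adi_preim. Qed.

Lemma homsp_rg_iso : lcomod_alg_iso H (homsp H r) (homsp H rg).
Proof.
have lg := char_scalar; have lgS := char_ant_scalar; have lr := r_linear.
have rsliceE b : rslice g b = Adg (lslice g b) by rewrite /Adg lslice_charK.
exists (rslice g); split.
- move=> b Bb; apply/homsp_rg_Ad; exists (lslice g b); split=> //.
  exact: homsp_lslice.
- split=> [a b _ _ ab|b /homsp_rg_Ad[c [Bc ->]]].
    by rewrite -(rslice_charK a) ab rslice_charK.
  exists (lslice gS c); split; first exact: homsp_lslice.
  by rewrite rsliceE lslice_char_antK.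
- by move=> k a b _ _; exact: rslice_linear.
- by split=> [|a b _ _]; [exact: (rslice1 lg char1) | exact: (rslice_mul lg char_mul)].
move=> a Ba; have [s [sE sB]] := homsp_left_coideal lr Ba.
exists s; split=> // f h; rewrite (cop_rslice a lg f h).
symmetry; have lid : linear (fun x : A => x) by [].
exact: (teq2_map lid (rslice_linear lg) sE f h).
Qed.

End CoisotropicSubgroup.

End Character.

End HopfAlgebra.

Theorem proposition3 (R : realType) (A : algType R[i]) (H : hopf_ops A)
    (K : lmodType R[i]) (O : cqs_ops A K) (r : A -> K) (g : A -> R[i]) :
  is_star_hopf H -> is_character H g -> is_rcqs H O r ->
  (* Ad_g is invertible, with inverse Ad_{g o S} *)
  let Adg := Ad H g in
  let Adginv := Ad H (fun x => g (ant H x)) in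
  (forall x, Adg (Adginv x) = x /\ Adginv (Adg x) = x) /\
  let rg := fun x => r (Adginv x) in
  [/\ (* Ker r_g = Ad_g Ker r *)
      (forall x, rg x = 0 <-> exists y, r y = 0 /\ x = Adg y),
      (* Ker r_g is a tau-invariant right ideal and two-sided coideal *)
      is_tau_rideal_coideal H (fun x => rg x = 0),
      (* it determines a right coisotropic quantum subgroup K_g *)
      (exists (Kg : lmodType R[i]) (Og : cqs_ops A Kg) (r' : A -> Kg),
          is_rcqs H Og r' /\ forall x, r' x = 0 <-> rg x = 0),
      (* B^{r_g} = Ad_g B^r *)
      (forall a, homsp H rg a <-> exists b, homsp H r b /\ a = Adg b) &
      (* B^{r_g} and B^r are isomorphic left comodule algebras *)
      lcomod_alg_iso H (homsp H r) (homsp H rg)].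
Proof.
move=> hopf g_char r_rcqs; cbv zeta.
rewrite (AdE hopf g_char) (Ad_antE hopf g_char).
split=> [x|]; first by rewrite (AdiK hopf g_char) (AdgK hopf g_char).
split.
- by move=> x; exact: (Adi_preim hopf g_char (fun y => r y = 0)).
- exact: (ker_rg_coideal hopf g_char r_rcqs).
- exact: (rcqs_rg hopf g_char r_rcqs).
- exact: (homsp_rg_Ad hopf g_char r_rcqs).
- exact: (homsp_rg_iso hopf g_char r_rcqs).
Qed.
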